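(* For every $\boldsymbol{\Delta}^0_2$ set $A\subseteq2^\omega$ there is a set $B\subseteq2^\omega$ with $B\equiv_W A$ such that $B$ is dualistic and $B=\Phi(C)=\Phi(U)$ for some closed set $C$ and some open set $U$.
   Context: $2^\omega$ is the Cantor space; $N_s=\{x:s\subset x\}$; $\mu$ the coin-tossing measure with $\mu(N_s)=2^{-\mathrm{lh}(s)}$. For measurable $A$ and $x\in2^\omega$, the density of $x$ in $A$ is $\mathcal D_A(x)=\lim_n\mu(A\cap N_{x\restriction n})/\mu(N_{x\restriction n})$ when the limit exists; $\Phi(A)=\{x:\mathcal D_A(x)=1\}$. A measurable set $B$ is dualistic if for every $x\in2^\omega$, $\mathcal D_B(x)$ exists and equals $0$ or $1$. $\boldsymbol{\Delta}^0_2$: sets both $F_\sigma$ and $G_\delta$. $X\equiv_W Y$ iff each is the preimage of the other under some continuous map $2^\omega\to2^\omega$. *)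

From Stdlib Require Import Reals Lra List ClassicalEpsilon.
Open Scope R_scope.

Definition cantor := nat -> bool.
Definition cset := cantor -> Prop.

Definition prefix (x : cantor) (n : nat) : list bool := map x (seq 0 n).

Definition N (s : list bool) : cset :=
  fun x => forall i, (i < length s)%nat -> x i = nth i s false.

Definition inter (A B : cset) : cset := fun x => A x /\ B x.
Definition compl (A : cset) : cset := fun x => ~ A x.

(* a countable cover by basic sets; None means "no set" *)
Definition cover_weight (c : nat -> option (list bool)) (k : nat) : R :=
  match c k with Some s => (/2) ^ (length s) | None => 0 end.

Definition covers (A : cset) (c : nat -> option (list bool)) : Prop :=
  forall x, A x -> exists k s, c k = Some s /\ N s x.

Definition cover_sums (A : cset) : R -> Prop :=
  fun r => exists c, covers A c /\ infinite_sum (cover_weight c) r.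

Definition is_glb (E : R -> Prop) (m : R) : Prop :=
  (forall r, E r -> m <= r) /\ (forall b, (forall r, E r -> b <= r) -> b <= m).

(* mu A = inf of the total weights of covers of A by basic sets;
   this is the outer measure extending mu(N_s) = 2^{-lh s}, and it agrees
   with the coin-tossing measure on measurable sets. *)
Definition mu (A : cset) : R :=
  epsilon (inhabits 0) (fun m => is_glb (cover_sums A) m).

Definition measurable (A : cset) : Prop :=
  forall E, mu E = mu (inter E A) + mu (inter E (compl A)).

Definition density (A : cset) (x : cantor) (d : R) : Prop :=
  Un_cv (fun n => mu (inter A (N (prefix x n))) / mu (N (prefix x n))) d.

Definition Phi (A : cset) : cset := fun x => density A x 1.

Definition dualistic (B : cset) : Prop :=
  measurable B /\ forall x, density B x 0 \/ density B x 1.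

Definition open (U : cset) : Prop :=
  forall x, U x -> exists n, forall y, N (prefix x n) y -> U y.
Definition closed (C : cset) : Prop := open (compl C).

Definition F_sigma (A : cset) : Prop :=
  exists F : nat -> cset, (forall k, closed (F k)) /\ (forall x, A x <-> exists k, F k x).
Definition G_delta (A : cset) : Prop :=
  exists G : nat -> cset, (forall k, open (G k)) /\ (forall x, A x <-> forall k, G k x).
Definition Delta02 (A : cset) : Prop := F_sigma A /\ G_delta A.

Definition set_eq (A B : cset) : Prop := forall x, A x <-> B x.

Definition continuous (f : cantor -> cantor) : Prop :=
  forall x n, exists m, forall y, (forall i, (i < m)%nat -> y i = x i) ->
    forall i, (i < n)%nat -> f y i = f x i.

Definition wadge_le (X Y : cset) : Prop :=
  exists f, continuous f /\ forall x, X x <-> Y (f x).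

Definition wadge_eq (X Y : cset) : Prop := wadge_le X Y /\ wadge_le Y X.

(* A Delta^0_2 set A is the limit of a function h on finite strings that stabilises along
   every point.  Reserve the positions 2^k - 1 of a point y for data bits and use the others as
   flags: if the first raised flag of y is at position i, then y is in B iff h accepts the data
   read below i; if y raises no flag, then y is in B iff its data lie in A.  Near a flagless point y, all of N_(y|n) except a set of relative
   measure at most 2^-(log2 n) raises a flag within the next two data blocks, and that flag
   reports the eventual value of h along the data of y.  So every set lying between the open set
   U of accepted points and the closed set C of non-rejected points has density 1 on B and 0 off
   B; in particular B = Phi(U) = Phi(C) and B is dualistic. *)

From Pilot Require Import Defs.
From Stdlib Require Import Reals List.
From Stdlib Require Import Lra Lia ClassicalEpsilon Classical FunctionalExtensionality.
Import Defs ListNotations.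

Open Scope R_scope.

Definition weight (s : list bool) : R := (/2) ^ length s.

Lemma half_pow_pos n : 0 < (/2) ^ n.
Proof. apply pow_lt. lra. Qed.

Lemma half_pow_le n m : (n <= m)%nat -> (/2) ^ m <= (/2) ^ n.
Proof.
  intros H. induction H; [lra|]. simpl. pose proof (half_pow_pos m). lra.
Qed.

Lemma half_pow_small e : 0 < e -> exists m, (/2) ^ m < e.
Proof.
  intros He. destruct (pow_lt_1_zero (/2) ltac:(rewrite Rabs_right; lra) e He) as [m Hm].
  exists m. specialize (Hm m (le_n _)). rewrite Rabs_right in Hm; auto.
  left; apply half_pow_pos.
Qed.

Lemma weight_pos s : 0 < weight s.
Proof. apply half_pow_pos. Qed.

Lemma weight_le_1 s : weight s <= 1.
Proof. unfold weight. rewrite <- (pow1 (length s)). apply pow_incr. lra. Qed.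

Lemma weight_cons b t : weight (b :: t) = / 2 * weight t.
Proof. reflexivity. Qed.

Lemma weight_snoc t b : weight (t ++ [b]) = / 2 * weight t.
Proof. unfold weight. rewrite length_app, pow_add. simpl. ring. Qed.

Lemma cover_weight_nonneg c k : 0 <= cover_weight c k.
Proof. unfold cover_weight. destruct (c k); [left; apply half_pow_pos | lra]. Qed.

Lemma Un_cv_const (M : R) : Un_cv (fun _ => M) M.
Proof. intros e He. exists 0%nat. intros. unfold R_dist. rewrite Rminus_diag, Rabs_R0. lra. Qed.

Lemma series_nonneg f l : infinite_sum f l -> (forall k, 0 <= f k) -> 0 <= l.
Proof.
  intros H Hp. eapply Rle_trans; [apply (cond_pos_sum f 0 Hp)|]. apply sum_incr; auto.
Qed.

Lemma series_of_bounded_sums f M : (forall k, 0 <= f k) -> (forall n, sum_f_R0 f n <= M) ->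
  exists l, infinite_sum f l /\ l <= M.
Proof.
  intros Hp HM.
  destruct (growing_cv (fun n => sum_f_R0 f n)) as [l Hl].
  - intros n. simpl. specialize (Hp (S n)). lra.
  - exists M. intros r [i ->]. apply HM.
  - exists l. split; [exact Hl|]. eapply Rle_cv_lim; [exact HM | exact Hl | apply Un_cv_const].
Qed.

Lemma sum_nonneg_mono f m n : (forall k, 0 <= f k) -> (m <= n)%nat ->
  sum_f_R0 f m <= sum_f_R0 f n.
Proof. intros Hp H. induction H; [lra|]. simpl. specialize (Hp (S m0)). lra. Qed.

Lemma cover_sums_inhabited A : exists r, cover_sums A r.
Proof.
  set (c := fun k : nat => match k with O => Some (@nil bool) | _ => None end).
  exists 1, c. split.
  - intros x _. exists 0%nat, nil. split; [reflexivity|]. intros i Hi. simpl in Hi. lia.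
  - assert (Hc : forall n, sum_f_R0 (cover_weight c) n = 1).
    { induction n; simpl; [reflexivity|]. rewrite IHn. unfold cover_weight. simpl. lra. }
    intros e He. exists 0%nat. intros n _. unfold R_dist. rewrite Hc, Rminus_diag, Rabs_R0. lra.
Qed.

Lemma cover_sums_nonneg A r : cover_sums A r -> 0 <= r.
Proof. intros [c [_ H]]. eapply series_nonneg; eauto. apply cover_weight_nonneg. Qed.

Lemma mu_is_glb A : is_glb (cover_sums A) (mu A).
Proof.
  unfold mu. apply epsilon_spec.
  destruct (cover_sums_inhabited A) as [r0 Hr0].
  destruct (completeness (fun r => cover_sums A (- r))) as [m [Hm1 Hm2]].
  - exists 0. intros r Hr. apply cover_sums_nonneg in Hr. lra.
  - exists (- r0). rewrite Ropp_involutive. exact Hr0.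
  - exists (- m). split.
    + intros r Hr. assert (- r <= m) by (apply Hm1; rewrite Ropp_involutive; exact Hr). lra.
    + intros b Hb. assert (m <= - b) by (apply Hm2; intros r Hr; specialize (Hb _ Hr); lra). lra.
Qed.

Lemma mu_nonneg A : 0 <= mu A.
Proof. apply (proj2 (mu_is_glb A)). apply cover_sums_nonneg. Qed.

Lemma mu_le_series A c r : covers A c -> infinite_sum (cover_weight c) r -> mu A <= r.
Proof. intros H1 H2. apply (proj1 (mu_is_glb A)). exists c; auto. Qed.

Lemma mu_le_sums_bound A c M : covers A c -> (forall n, sum_f_R0 (cover_weight c) n <= M) ->
  mu A <= M.
Proof.
  intros Hc HM. destruct (series_of_bounded_sums (cover_weight c) M) as [l [Hl HlM]]; auto.
  - apply cover_weight_nonneg.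
  - eapply Rle_trans; [eapply mu_le_series; eauto | exact HlM].
Qed.

Lemma mu_approx A e : 0 < e ->
  exists c r, covers A c /\ infinite_sum (cover_weight c) r /\ r < mu A + e.
Proof.
  intros He. apply NNPP. intros Hn.
  assert (mu A + e <= mu A); [|lra].
  apply (proj2 (mu_is_glb A)). intros r [c [Hc Hr]].
  apply Rnot_lt_le. intros Hlt. apply Hn. eauto.
Qed.

Lemma mu_mono (A A' : cset) : (forall x, A x -> A' x) -> mu A <= mu A'.
Proof.
  intros Hs. apply (proj2 (mu_is_glb A')). intros r [c [Hc Hr]].
  eapply mu_le_series; eauto. intros x Hx. apply Hc, Hs, Hx.
Qed.

Definition interleave (c1 c2 : nat -> option (list bool)) (n : nat) : option (list bool) :=
  if Nat.even n then c1 (Nat.div2 n) else c2 (Nat.div2 n).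

Lemma sum_interleave c1 c2 m :
  sum_f_R0 (cover_weight (interleave c1 c2)) (S (2 * m)) =
  sum_f_R0 (cover_weight c1) m + sum_f_R0 (cover_weight c2) m.
Proof.
  induction m.
  - simpl. unfold cover_weight, interleave. simpl. ring.
  - replace (S (2 * S m)) with (S (S (2 * S m - 1))) by lia.
    rewrite !tech5. replace (S (2 * S m - 1)) with (2 * S m)%nat by lia.
    replace (2 * S m - 1)%nat with (S (2 * m)) by lia. rewrite IHm.
    unfold cover_weight, interleave.
    rewrite Nat.even_succ, Nat.odd_mul, Nat.even_mul, Nat.div2_succ_double, Nat.div2_double.
    simpl. ring.
Qed.

Lemma mu_union (P Q : cset) : mu (fun x => P x \/ Q x) <= mu P + mu Q.
Proof.
  apply Rnot_lt_le. intros Hlt.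
  set (e := (mu (fun x => P x \/ Q x) - (mu P + mu Q)) / 3).
  assert (He : 0 < e) by (unfold e; lra).
  destruct (mu_approx P e He) as [c1 [r1 [Hc1 [Hr1 Hl1]]]].
  destruct (mu_approx Q e He) as [c2 [r2 [Hc2 [Hr2 Hl2]]]].
  assert (mu (fun x => P x \/ Q x) <= r1 + r2); [|unfold e in *; lra].
  apply (mu_le_sums_bound _ (interleave c1 c2)).
  - intros x [Hx|Hx].
    + destruct (Hc1 x Hx) as [k [s [Hk Hs]]]. exists (2 * k)%nat, s. split; auto.
      unfold interleave. rewrite Nat.even_mul, Nat.div2_double. exact Hk.
    + destruct (Hc2 x Hx) as [k [s [Hk Hs]]]. exists (S (2 * k)), s. split; auto.
      unfold interleave. rewrite Nat.even_succ, Nat.odd_mul, Nat.div2_succ_double. exact Hk.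
  - intros n. apply Rle_trans with (sum_f_R0 (cover_weight (interleave c1 c2)) (S (2 * n))).
    + apply sum_nonneg_mono; [apply cover_weight_nonneg | lia].
    + rewrite sum_interleave.
      pose proof (sum_incr _ n _ Hr1 (cover_weight_nonneg c1)).
      pose proof (sum_incr _ n _ Hr2 (cover_weight_nonneg c2)). lra.
Qed.

Definition option_weight (o : option (list bool)) : R :=
  match o with Some s => weight s | None => 0 end.
Definition list_weight (l : list (list bool)) : R := fold_right (fun s acc => weight s + acc) 0 l.
Definition option_list_weight (l : list (option (list bool))) : R :=
  fold_right (fun o acc => option_weight o + acc) 0 l.

Lemma option_weight_nonneg o : 0 <= option_weight o.
Proof. destruct o; simpl; [left; apply weight_pos | lra]. Qed.

Lemma list_weight_app l1 l2 : list_weight (l1 ++ l2) = list_weight l1 + list_weight l2.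
Proof. induction l1; simpl; [ring | rewrite IHl1; ring]. Qed.

Lemma option_list_weight_app l1 l2 :
  option_list_weight (l1 ++ l2) = option_list_weight l1 + option_list_weight l2.
Proof. induction l1; simpl; [ring | rewrite IHl1; ring]. Qed.

Lemma list_weight_nonneg l : 0 <= list_weight l.
Proof. induction l; simpl; [lra|]. pose proof (weight_pos a). lra. Qed.

Lemma option_list_weight_nonneg l : 0 <= option_list_weight l.
Proof. induction l; simpl; [lra|]. pose proof (option_weight_nonneg a). lra. Qed.

Lemma option_list_weight_Some l : option_list_weight (map Some l) = list_weight l.
Proof. induction l; simpl; [ring | rewrite IHl; ring]. Qed.

Lemma sum_nth_le_option_list_weight (l : list (option (list bool))) n :
  sum_f_R0 (fun k => option_weight (nth k l None)) n <= option_list_weight l.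
Proof.
  revert n. induction l as [|o l IH]; intros n.
  - induction n; simpl in *; lra.
  - destruct n.
    + simpl. pose proof (option_list_weight_nonneg l). lra.
    + rewrite decomp_sum by lia. simpl. specialize (IH n). lra.
Qed.

Lemma mu_le_list_weight (A : cset) l :
  (forall x, A x -> exists s, In s l /\ N s x) -> mu A <= list_weight l.
Proof.
  intros H. apply (mu_le_sums_bound A (fun k => nth k (map Some l) None)).
  - intros x Hx. destruct (H x Hx) as [s [Hin Hs]].
    destruct (In_nth _ _ nil Hin) as [k [Hk1 Hk2]]. exists k, s. split; auto.
    rewrite (nth_indep _ None (Some nil)) by (rewrite length_map; auto).
    rewrite map_nth, Hk2. reflexivity.
  - intros n. rewrite <- option_list_weight_Some. apply sum_nth_le_option_list_weight.
Qed.

Fixpoint is_prefix (a t : list bool) : bool :=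
  match a, t with
  | [], _ => true
  | _ :: _, [] => false
  | x :: a', y :: t' => Bool.eqb x y && is_prefix a' t'
  end.

(* The measure of [N a ∩ N t]. *)
Definition overlap_weight (a t : list bool) : R :=
  if is_prefix a t then weight t else if is_prefix t a then weight a else 0.

Lemma is_prefix_length a t : is_prefix a t = true -> (length a <= length t)%nat.
Proof.
  revert t; induction a; intros t H; simpl; [lia|]. destruct t; simpl in H; [discriminate|].
  apply andb_prop in H. destruct H as [_ H]. apply IHa in H. simpl. lia.
Qed.

Lemma N_cons b a x : N (b :: a) x <-> x 0%nat = b /\ N a (fun i => x (S i)).
Proof.
  unfold N. split.
  - intros H. split; [apply (H 0%nat); simpl; lia|]. intros i Hi. apply (H (S i)). simpl; lia.
  - intros [H0 H] i Hi. destruct i; simpl; auto. apply H. simpl in Hi; lia.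
Qed.

Lemma is_prefix_N a t x : N a x -> N t x -> (length a <= length t)%nat -> is_prefix a t = true.
Proof.
  revert t x. induction a as [|b a IH]; intros t x Ha Ht Hl; [reflexivity|].
  destruct t as [|y t]; simpl in Hl; [lia|].
  apply N_cons in Ha, Ht. destruct Ha as [Ha1 Ha2], Ht as [Ht1 Ht2].
  simpl. apply andb_true_intro. split.
  - rewrite <- Ha1, <- Ht1. destruct (x 0%nat); reflexivity.
  - eapply IH; eauto. lia.
Qed.

Lemma overlap_weight_nil_r a : overlap_weight a [] = weight a.
Proof. unfold overlap_weight. destruct a; reflexivity. Qed.

Lemma overlap_weight_nil_l t : overlap_weight [] t = weight t.
Proof. reflexivity. Qed.

Lemma overlap_weight_cons x a y t :
  overlap_weight (x :: a) (y :: t) = if Bool.eqb x y then / 2 * overlap_weight a t else 0.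
Proof.
  unfold overlap_weight. simpl. destruct x, y; simpl; try reflexivity;
  destruct (is_prefix a t), (is_prefix t a); try reflexivity; ring.
Qed.

Lemma overlap_weight_split t a :
  overlap_weight a t = overlap_weight a (t ++ [false]) + overlap_weight a (t ++ [true]).
Proof.
  revert a. induction t as [|y t IH]; intros a.
  - destruct a as [|x a].
    + unfold overlap_weight, weight. simpl. field.
    + rewrite overlap_weight_nil_r. simpl app. rewrite !overlap_weight_cons, !overlap_weight_nil_r.
      destruct x; simpl; rewrite weight_cons; ring.
  - destruct a as [|x a].
    + rewrite !overlap_weight_nil_l, !weight_snoc. field.
    + simpl app. rewrite !overlap_weight_cons.
      destruct (Bool.eqb x y); [rewrite (IH a); ring | ring].
Qed.

Lemma overlap_weight_nonneg a t : 0 <= overlap_weight a t.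
Proof.
  unfold overlap_weight. pose proof (weight_pos a). pose proof (weight_pos t).
  destruct (is_prefix a t), (is_prefix t a); lra.
Qed.

Lemma overlap_weight_le a t : overlap_weight a t <= weight a.
Proof.
  unfold overlap_weight. destruct (is_prefix a t) eqn:E.
  - apply half_pow_le, is_prefix_length; auto.
  - pose proof (weight_pos a). destruct (is_prefix t a); lra.
Qed.

(* A cover of [N s] of total weight [r < weight s] would leave, splitting [N s] in halves
   forever, a branch on which the cover is still deficient; the limit point of that branch
   is covered by some [N a], which contradicts deficiency at depth [length a]. *)
Section CylinderLowerBound.
Variable s : list bool.
Variable c : nat -> option (list bool).
Variable r : R.
Hypothesis covers_s : covers (N s) c.
Hypothesis sum_c : infinite_sum (cover_weight c) r.

Definition mass_on (t : list bool) (k : nat) : R :=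
  match c k with Some a => overlap_weight a t | None => 0 end.

Lemma mass_on_bounds t k : 0 <= mass_on t k <= cover_weight c k.
Proof.
  unfold mass_on, cover_weight. destruct (c k).
  - split; [apply overlap_weight_nonneg | apply overlap_weight_le].
  - lra.
Qed.

Lemma mass_on_summable t : exists l, infinite_sum (mass_on t) l /\ l <= r.
Proof.
  destruct (Rseries_CV_comp (mass_on t) (cover_weight c) (mass_on_bounds t) (exist _ r sum_c))
    as [l Hl].
  exists l. split; [exact Hl|]. eapply Rle_cv_lim; [|exact Hl|exact sum_c].
  intros n. apply sum_Rle. intros; apply mass_on_bounds.
Qed.

Definition deficient (t : list bool) : Prop :=
  exists l, infinite_sum (mass_on t) l /\ l < weight t.

Lemma deficient_child t : deficient t -> deficient (t ++ [false]) \/ deficient (t ++ [true]).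
Proof.
  intros [l [Hl Hlt]].
  destruct (mass_on_summable (t ++ [false])) as [l0 [H0 _]].
  destruct (mass_on_summable (t ++ [true])) as [l1 [H1 _]].
  assert (Hs : Un_cv (fun n => sum_f_R0 (mass_on t) n) (l0 + l1)).
  { eapply Un_cv_ext; [|apply (CV_plus _ _ _ _ H0 H1)].
    intros n. cbv beta. rewrite <- sum_plus. apply sum_eq. intros i _.
    unfold mass_on. destruct (c i); [rewrite <- overlap_weight_split|]; ring. }
  assert (l = l0 + l1) by (eapply UL_sequence; eauto).
  destruct (Rlt_dec l0 (/2 * weight t)).
  - left. exists l0. rewrite weight_snoc. auto.
  - right. exists l1. rewrite weight_snoc. split; auto. lra.
Qed.

Fixpoint deficient_branch (n : nat) : list bool :=
  match n with
  | O => s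
  | S n => let p := deficient_branch n in
           if excluded_middle_informative (deficient (p ++ [false])) then p ++ [false]
           else p ++ [true]
  end.

Lemma deficient_branch_deficient n : deficient s -> deficient (deficient_branch n).
Proof.
  intros H. induction n; simpl; auto.
  destruct (excluded_middle_informative _); auto.
  destruct (deficient_child _ IHn); tauto.
Qed.

Lemma deficient_branch_length n : length (deficient_branch n) = (length s + n)%nat.
Proof.
  induction n; simpl; [lia|].
  destruct (excluded_middle_informative _); rewrite length_app; simpl; lia.
Qed.

Lemma deficient_branch_extends n m : (n <= m)%nat ->
  exists t, deficient_branch m = deficient_branch n ++ t.
Proof.
  intros H. induction H.
  - exists []. rewrite app_nil_r; auto.
  - destruct IHle as [t Ht]. simpl. destruct (excluded_middle_informative _);
    [exists (t ++ [false]) | exists (t ++ [true])]; rewrite Ht, app_assoc; auto.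
Qed.

Definition branch_limit (i : nat) : bool := nth i (deficient_branch (S i)) false.

Lemma branch_limit_N n : N (deficient_branch n) branch_limit.
Proof.
  intros i Hi. unfold branch_limit.
  destruct (deficient_branch_extends n (Nat.max n (S i))) as [t1 H1]; [lia|].
  destruct (deficient_branch_extends (S i) (Nat.max n (S i))) as [t2 H2]; [lia|].
  assert (H : nth i (deficient_branch n ++ t1) false = nth i (deficient_branch (S i) ++ t2) false)
    by (rewrite <- H1, <- H2; auto).
  rewrite !app_nth1 in H; auto. rewrite deficient_branch_length; lia.
Qed.

Lemma weight_le_cover_sum : weight s <= r.
Proof.
  apply Rnot_lt_le. intros Hlt.
  assert (Hd : deficient s).
  { destruct (mass_on_summable s) as [l [Hl Hle]]. exists l. split; auto. lra. }
  destruct (covers_s branch_limit (branch_limit_N 0)) as [k [a [Hk Ha]]].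
  set (t := deficient_branch (length a)).
  destruct (deficient_branch_deficient (length a) Hd) as [l [Hl Hlt2]].
  assert (Hfull : mass_on t k = weight t).
  { unfold mass_on. rewrite Hk. unfold overlap_weight.
    rewrite (is_prefix_N a t branch_limit Ha (branch_limit_N _)); auto.
    unfold t. rewrite deficient_branch_length. lia. }
  assert (Hnn : forall j, 0 <= mass_on t j) by (intros; apply mass_on_bounds).
  pose proof (sum_incr (mass_on t) k l Hl Hnn).
  assert (mass_on t k <= sum_f_R0 (mass_on t) k).
  { destruct k; simpl; [lra|]. pose proof (cond_pos_sum (mass_on t) k Hnn). lra. }
  fold t in Hlt2. lra.
Qed.
End CylinderLowerBound.

Lemma mu_N s : mu (N s) = weight s.
Proof.
  apply Rle_antisym.
  - replace (weight s) with (list_weight [s]) by (simpl; ring).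
    apply mu_le_list_weight. intros x Hx. exists s. simpl; auto.
  - apply (proj2 (mu_is_glb (N s))). intros r [c [Hc Hr]]. eapply weight_le_cover_sum; eauto.
Qed.

Section Flatten.
Variable L : nat -> list (list bool).

Definition flat_blocks (m : nat) : list (option (list bool)) :=
  concat (map (fun k => None :: map Some (L k)) (seq 0 m)).

(* Each block starts with a [None], so [flat_blocks (S n)] has at least [n + 1] entries. *)
Definition flatten (n : nat) : option (list bool) := nth n (flat_blocks (S n)) None.

Lemma flat_blocks_S m : flat_blocks (S m) = flat_blocks m ++ None :: map Some (L m).
Proof.
  unfold flat_blocks. rewrite seq_S, map_app, concat_app. simpl. rewrite app_nil_r. reflexivity.
Qed.

Lemma flat_blocks_length m : (m <= length (flat_blocks m))%nat.
Proof. induction m; [simpl; lia|]. rewrite flat_blocks_S, length_app. simpl. lia. Qed.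

Lemma flat_blocks_length_le m m' : (m <= m')%nat ->
  (length (flat_blocks m) <= length (flat_blocks m'))%nat.
Proof. intros H. induction H; auto. rewrite flat_blocks_S, length_app. lia. Qed.

Lemma nth_flat_blocks_stable n m m' : (n < length (flat_blocks m))%nat -> (m <= m')%nat ->
  nth n (flat_blocks m') None = nth n (flat_blocks m) None.
Proof.
  intros Hn H. induction H; auto.
  rewrite flat_blocks_S, app_nth1; auto. pose proof (flat_blocks_length_le m m0 H). lia.
Qed.

Lemma flatten_lists k s : In s (L k) -> exists n, flatten n = Some s.
Proof.
  intros Hin. destruct (In_nth _ _ [] Hin) as [p [Hp1 Hp2]].
  set (q := (length (flat_blocks k) + S p)%nat).
  assert (Hq : nth q (flat_blocks (S k)) None = Some s).
  { rewrite flat_blocks_S, app_nth2 by (unfold q; lia). unfold q.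
    replace (length (flat_blocks k) + S p - length (flat_blocks k))%nat with (S p) by lia.
    simpl. rewrite (nth_indep _ None (Some [])) by (rewrite length_map; auto).
    rewrite map_nth, Hp2. reflexivity. }
  exists q. unfold flatten. rewrite (nth_flat_blocks_stable q (S k) (S q)); auto.
  - rewrite flat_blocks_S, length_app. simpl. rewrite length_map. unfold q. lia.
  - pose proof (flat_blocks_length k). unfold q. lia.
Qed.

Lemma option_list_weight_flat_blocks m :
  option_list_weight (flat_blocks (S m)) = sum_f_R0 (fun k => list_weight (L k)) m.
Proof.
  induction m; rewrite flat_blocks_S, option_list_weight_app.
  - simpl. rewrite option_list_weight_Some. ring.
  - rewrite IHm. simpl. rewrite option_list_weight_Some. ring.
Qed.

Lemma sum_flatten_le n :
  sum_f_R0 (cover_weight flatten) n <= sum_f_R0 (fun k => list_weight (L k)) n.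
Proof.
  rewrite <- option_list_weight_flat_blocks.
  eapply Rle_trans; [|apply (sum_nth_le_option_list_weight (flat_blocks (S n)) n)].
  apply sum_Rle. intros i Hi. change (cover_weight flatten i) with (option_weight (flatten i)).
  unfold flatten. destruct (Nat.lt_ge_cases i (length (flat_blocks (S i)))).
  - rewrite (nth_flat_blocks_stable i (S i) (S n)); [lra | auto | lia].
  - rewrite nth_overflow by auto. apply option_weight_nonneg.
Qed.
End Flatten.

Lemma mu_le_list_covers (X : cset) (L : nat -> list (list bool)) l :
  (forall x, X x -> exists k s, In s (L k) /\ N s x) ->
  infinite_sum (fun k => list_weight (L k)) l -> mu X <= l.
Proof.
  intros Hcov Hl. apply (mu_le_sums_bound _ (flatten L)).
  - intros x Hx. destruct (Hcov x Hx) as [k [s [Hs Hxs]]].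
    destruct (flatten_lists L k s Hs) as [n Hn]. exists n, s. auto.
  - intros n. eapply Rle_trans; [apply sum_flatten_le|].
    apply sum_incr; auto. intros; apply list_weight_nonneg.
Qed.

Lemma sum_half_pow_le n : sum_f_R0 (fun k => (/2) ^ S k) n <= 1.
Proof.
  assert (H : sum_f_R0 (fun k => (/2) ^ S k) n = 1 - (/2) ^ S n).
  { induction n; simpl in *; [field|]. rewrite IHn. field. }
  rewrite H. pose proof (half_pow_pos (S n)). lra.
Qed.

Definition option_N (o : option (list bool)) : cset :=
  fun x => match o with Some a => N a x | None => False end.

Definition splits_with_slack (B : cset) (o : option (list bool)) (e : R)
  (L : list (list bool) * list (list bool)) : Prop :=
  (forall x, option_N o x -> B x -> exists s, In s (fst L) /\ N s x) /\
  (forall x, option_N o x -> ~ B x -> exists s, In s (snd L) /\ N s x) /\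
  list_weight (fst L) + list_weight (snd L) <= option_weight o + e.

Lemma series_of_bounded_sums_plus f g M : (forall k, 0 <= f k) -> (forall k, 0 <= g k) ->
  (forall n, sum_f_R0 (fun k => f k + g k) n <= M) ->
  exists l1 l2, infinite_sum f l1 /\ infinite_sum g l2 /\ l1 + l2 <= M.
Proof.
  intros Hf Hg HM.
  destruct (series_of_bounded_sums f M) as [l1 [Hl1 _]]; auto.
  { intros n. specialize (HM n). rewrite sum_plus in HM. pose proof (cond_pos_sum _ n Hg). lra. }
  destruct (series_of_bounded_sums g M) as [l2 [Hl2 _]]; auto.
  { intros n. specialize (HM n). rewrite sum_plus in HM. pose proof (cond_pos_sum _ n Hf). lra. }
  exists l1, l2. repeat split; auto.
  eapply Rle_cv_lim; [exact HM | | apply Un_cv_const].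
  eapply Un_cv_ext; [|apply (CV_plus _ _ _ _ Hl1 Hl2)]. intros n. cbv beta.
  rewrite sum_plus. reflexivity.
Qed.

Section FiniteSplits.
Variable B : cset.
Hypothesis finite_splits : forall a e, 0 < e -> exists L, splits_with_slack B (Some a) e L.

(* The cylinder [c k] of a cover is split with slack [eps / 2 ^ (k + 1)]. *)
Lemma mu_split_le_cover E c r eps : covers E c -> infinite_sum (cover_weight c) r -> 0 < eps ->
  mu (inter E B) + mu (inter E (compl B)) <= r + eps.
Proof.
  intros Hc Hr Heps.
  destruct (choice (fun k => splits_with_slack B (c k) ((/2) ^ S k * eps))) as [halves Hsp].
  { intros k. pose proof (half_pow_pos (S k)). destruct (c k) as [a|].
    - apply finite_splits. nra.
    - exists ([], []). repeat split; [intros x [] | intros x [] | simpl in *; nra]. }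
  set (L1 := fun k => fst (halves k)). set (L2 := fun k => snd (halves k)).
  destruct (series_of_bounded_sums_plus (fun k => list_weight (L1 k)) (fun k => list_weight (L2 k))
              (r + eps)) as [l1 [l2 [Hl1 [Hl2 Hl12]]]]; try (intros; apply list_weight_nonneg).
  { intros n. apply Rle_trans with (sum_f_R0 (fun k => cover_weight c k + (/2) ^ S k * eps) n).
    - apply sum_Rle. intros k _. apply (Hsp k).
    - rewrite sum_plus, <- scal_sum.
      pose proof (sum_incr _ n _ Hr (cover_weight_nonneg c)).
      pose proof (sum_half_pow_le n). nra. }
  assert (mu (inter E B) <= l1).
  { apply (mu_le_list_covers _ L1); auto. intros x [HE HB].
    destruct (Hc x HE) as [k [a [Hk Ha]]].
    destruct (proj1 (Hsp k) x) as [s Hs]; [unfold option_N; rewrite Hk; auto | auto |].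
    exists k, s. exact Hs. }
  assert (mu (inter E (compl B)) <= l2).
  { apply (mu_le_list_covers _ L2); auto. intros x [HE HB].
    destruct (Hc x HE) as [k [a [Hk Ha]]].
    destruct (proj1 (proj2 (Hsp k)) x) as [s Hs]; [unfold option_N; rewrite Hk; auto | auto |].
    exists k, s. exact Hs. }
  lra.
Qed.

(* A local version of Carathéodory's criterion: it suffices that every basic set can be split
   along [B] by two finite covers whose weights exceed its own weight arbitrarily little. *)
Lemma measurable_of_finite_splits : measurable B.
Proof.
  intros E. apply Rle_antisym.
  { eapply Rle_trans; [|apply mu_union]. apply mu_mono. intros x Hx.
    destruct (classic (B x)); [left | right]; split; auto. }
  apply Rnot_lt_le. intros Hlt.
  set (eps := (mu (inter E B) + mu (inter E (compl B)) - mu E) / 3).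
  assert (Heps : 0 < eps) by (unfold eps; lra).
  destruct (mu_approx E eps Heps) as [c [r [Hc [Hr Hrl]]]].
  pose proof (mu_split_le_cover E c r eps Hc Hr Heps). unfold eps in *. lra.
Qed.
End FiniteSplits.

Open Scope nat_scope.

(* Positions [2 ^ k - 1] carry the data bits of a point; every other position is a flag
   position, and the first raised flag decides membership of the point in the coded set. *)
Definition is_flag (i : nat) : bool := negb (Nat.eqb (2 ^ Nat.log2 (S i)) (S i)).

Lemma pow2_pos k : 1 <= 2 ^ k.
Proof. pose proof (Nat.pow_nonzero 2 k). lia. Qed.

Lemma is_flag_data_pos k : is_flag (2 ^ k - 1) = false.
Proof.
  unfold is_flag. pose proof (pow2_pos k). replace (S (2 ^ k - 1)) with (2 ^ k) by lia.
  rewrite Nat.log2_pow2 by lia. rewrite Nat.eqb_refl. reflexivity.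
Qed.

Lemma not_flag_pow2 i : is_flag i = false -> S i = 2 ^ Nat.log2 (S i).
Proof. unfold is_flag. intros H. apply Bool.negb_false_iff, Nat.eqb_eq in H. lia. Qed.

Lemma is_flag_above n : exists p, n <= p /\ is_flag p = true.
Proof.
  exists (2 ^ (n + 2) - 2). split.
  - pose proof (Nat.pow_gt_lin_r 2 (n + 2) ltac:(lia)). lia.
  - unfold is_flag. apply Bool.negb_true_iff, Nat.eqb_neq.
    assert (H2 : 2 ^ (n + 2) = 2 * 2 ^ (n + 1)) by (rewrite <- Nat.pow_succ_r'; f_equal; lia).
    assert (2 <= 2 ^ (n + 1))
      by (rewrite Nat.add_1_r, Nat.pow_succ_r'; pose proof (pow2_pos n); lia).
    rewrite (Nat.log2_unique (S (2 ^ (n + 2) - 2)) (n + 1)); [lia | lia |].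
    replace (S (n + 1)) with (n + 2) by lia. lia.
Qed.

Definition first_flag (f : nat -> bool) (i : nat) : Prop :=
  is_flag i = true /\ f i = true /\ forall j, j < i -> is_flag j = true -> f j = false.

Fixpoint find_flag (f : nat -> bool) (n : nat) : option nat :=
  match n with
  | O => None
  | S n => match find_flag f n with
           | Some i => Some i
           | None => if andb (is_flag n) (f n) then Some n else None
           end
  end.

Lemma find_flag_ext f g n : (forall i, i < n -> f i = g i) -> find_flag f n = find_flag g n.
Proof.
  induction n; intros H; simpl; auto. rewrite IHn by (intros; apply H; lia).
  rewrite (H n) by lia. reflexivity.
Qed.

Lemma find_flag_None f n :
  find_flag f n = None <-> forall i, i < n -> is_flag i = true -> f i = false.
Proof.
  induction n; simpl.
  - split; auto. intros; lia.
  - destruct (find_flag f n) eqn:E.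
    + split; [discriminate|]. intros H.
      assert (H' : forall i, i < n -> is_flag i = true -> f i = false)
        by (intros; apply H; auto; lia).
      apply IHn in H'. discriminate.
    + specialize (proj1 IHn eq_refl) as IH.
      destruct (is_flag n) eqn:Ep, (f n) eqn:Ef; simpl.
      * split; [discriminate|]. intros H. rewrite (H n) in Ef by (auto; lia). discriminate.
      * split; [|reflexivity]. intros _ i Hi Hp.
        assert (i < n \/ i = n) as [|] by lia; [auto | subst; auto].
      * split; [|reflexivity]. intros _ i Hi Hp.
        assert (i < n \/ i = n) as [|] by lia; [auto | subst; congruence].
      * split; [|reflexivity]. intros _ i Hi Hp.
        assert (i < n \/ i = n) as [|] by lia; [auto | subst; congruence].
Qed.

Lemma find_flag_Some f n i : find_flag f n = Some i -> i < n /\ first_flag f i.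
Proof.
  induction n; simpl; [discriminate|].
  destruct (find_flag f n) eqn:E.
  - intros [= <-]. destruct (IHn eq_refl). split; auto; lia.
  - destruct (andb (is_flag n) (f n)) eqn:Ep; [|discriminate]. intros [= <-].
    apply andb_prop in Ep. destruct Ep. repeat split; auto.
    intros j Hj Hpj. apply find_flag_None with n; auto.
Qed.

Lemma first_flag_unique f i j : first_flag f i -> first_flag f j -> i = j.
Proof.
  intros [A1 [A2 A3]] [B1 [B2 B3]].
  destruct (Nat.lt_trichotomy i j) as [H|[H|H]]; auto.
  - rewrite B3 in A2; auto. discriminate.
  - rewrite A3 in B2; auto. discriminate.
Qed.

Lemma first_flag_ext f g i : (forall j, j <= i -> f j = g j) -> first_flag f i -> first_flag g i.
Proof.
  intros H [A1 [A2 A3]]. split; auto. split; [rewrite <- H; auto|].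
  intros j Hj Hp. rewrite <- H by lia. auto.
Qed.

Lemma prefix_ext (f g : cantor) n : (forall k, k < n -> f k = g k) -> prefix f n = prefix g n.
Proof.
  intros H. unfold prefix. apply map_ext_in. intros a Ha. apply in_seq in Ha. apply H. lia.
Qed.

Lemma length_prefix f n : length (prefix f n) = n.
Proof. unfold prefix. rewrite length_map, length_seq. reflexivity. Qed.

Lemma nth_prefix f n i : i < n -> nth i (prefix f n) false = f i.
Proof.
  intros H. unfold prefix.
  rewrite (nth_indep _ false (f 0)) by (rewrite length_map, length_seq; auto).
  rewrite map_nth, seq_nth; auto.
Qed.

Lemma N_prefix x n y : N (prefix x n) y <-> forall i, i < n -> y i = x i.
Proof.
  unfold N. rewrite length_prefix.
  split; intros H i Hi; rewrite H by auto; [apply nth_prefix | symmetry; apply nth_prefix]; auto.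
Qed.

Lemma N_prefix_self x n : N (prefix x n) x.
Proof. apply N_prefix. auto. Qed.

Lemma N_prefix_le x m k y : m <= k -> N (prefix x k) y -> N (prefix x m) y.
Proof.
  intros H Hy. apply N_prefix. intros i Hi. apply (proj1 (N_prefix _ _ _) Hy). lia.
Qed.

Lemma N_prefix_first_flag x y i n : first_flag x i -> i < n -> N (prefix x n) y -> first_flag y i.
Proof.
  intros Hi Hn Hy. eapply first_flag_ext; [|exact Hi].
  intros j Hj. symmetry. apply (proj1 (N_prefix _ _ _) Hy). lia.
Qed.

Definition data (x : cantor) : cantor := fun k => x (2 ^ k - 1).

Lemma data_pos_lt k i : k < Nat.log2 i -> 2 ^ k - 1 < i.
Proof.
  intros H. destruct i; [change (Nat.log2 0) with 0 in H; lia|].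
  pose proof (Nat.log2_spec (S i) ltac:(lia)) as [H1 _].
  pose proof (Nat.pow_lt_mono_r 2 k (Nat.log2 (S i)) ltac:(lia) H). lia.
Qed.

Definition of_list (s : list bool) : cantor := fun i => nth i s false.

Lemma N_of_list s x : N s x -> forall i, i < length s -> x i = of_list s i.
Proof. intros H i Hi. apply H; auto. Qed.

Lemma of_list_snoc a b i : i < length a -> of_list (a ++ [b]) i = of_list a i.
Proof. intros H. unfold of_list. rewrite app_nth1; auto. Qed.

Lemma N_snoc a x : N a x -> N (a ++ [x (length a)]) x.
Proof.
  intros H i Hi. rewrite length_app in Hi. simpl in Hi.
  assert (i < length a \/ i = length a) as [Hl|He] by lia.
  - rewrite app_nth1; auto.
  - subst. rewrite app_nth2, Nat.sub_diag by lia. reflexivity.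
Qed.

Open Scope R_scope.

(* Near a flagless [y] with [Nat.log2 n = K], these are the only points of [N (prefix y n)] that
   raise no flag below [2 ^ (K + 2) - 1]. *)
Definition quiet_window (y : cantor) (K : nat) : cset :=
  fun w => forall j, (j < 2 ^ S (S K) - 1)%nat -> j <> (2 ^ S K - 1)%nat -> w j = y j.

Lemma mu_quiet_window y K : mu (quiet_window y K) <= 2 * (/2) ^ (2 ^ S (S K) - 1).
Proof.
  set (L := (2 ^ S (S K) - 1)%nat). set (p := (2 ^ S K - 1)%nat).
  set (set_at (b : bool) := fun j => if Nat.eqb j p then b else y j).
  eapply Rle_trans.
  - apply (mu_le_list_weight _ [prefix (set_at false) L; prefix (set_at true) L]).
    intros x Hx. exists (prefix (set_at (x p)) L). split.
    + destruct (x p); simpl; auto.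
    + apply N_prefix. intros i Hi. unfold set_at. destruct (Nat.eqb_spec i p).
      * subst. reflexivity.
      * apply Hx; auto.
  - simpl. unfold weight. rewrite !length_prefix. lra.
Qed.

Lemma log2_ge n K : (2 ^ K <= n)%nat -> (K <= Nat.log2 n)%nat.
Proof. intros H. apply Nat.log2_le_pow2; [|auto]. pose proof (pow2_pos K). lia. Qed.

Definition ratio (X : cset) (t : list bool) : R := mu (inter X (N t)) / mu (N t).

Lemma ratio_near_one X t (E : cset) d : (forall w, N t w -> ~ X w -> E w) -> mu E <= d ->
  1 - d / weight t <= ratio X t <= 1.
Proof.
  intros HE Hd. unfold ratio. rewrite mu_N. pose proof (weight_pos t).
  assert (mu (inter X (N t)) <= weight t)
    by (rewrite <- mu_N; apply mu_mono; intros x [_ Hx]; auto).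
  assert (weight t <= mu (inter X (N t)) + d).
  { rewrite <- mu_N. eapply Rle_trans; [|apply Rplus_le_compat_l; apply Hd].
    eapply Rle_trans; [|apply mu_union]. apply mu_mono. intros x Hx.
    destruct (classic (X x)); [left; split; auto | right; auto]. }
  split.
  - apply Rle_trans with ((weight t - d) / weight t); [right; field; lra|].
    apply Rmult_le_compat_r; [left; apply Rinv_0_lt_compat; auto | lra].
  - apply Rle_trans with (weight t / weight t); [|right; field; lra].
    apply Rmult_le_compat_r; [left; apply Rinv_0_lt_compat; auto | lra].
Qed.

Lemma ratio_near_zero X t (E : cset) d : (forall w, N t w -> X w -> E w) -> mu E <= d ->
  0 <= ratio X t <= d / weight t.
Proof.
  intros HE Hd. unfold ratio. rewrite mu_N. pose proof (weight_pos t).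
  assert (mu (inter X (N t)) <= d)
    by (eapply Rle_trans; [apply mu_mono | apply Hd]; intros x [H1 H2]; auto).
  split.
  - apply Rmult_le_pos; [apply mu_nonneg | left; apply Rinv_0_lt_compat; auto].
  - apply Rmult_le_compat_r; [left; apply Rinv_0_lt_compat; auto | lra].
Qed.

Lemma weight_prefix y n : weight (prefix y n) = (/2) ^ n.
Proof. unfold weight. rewrite length_prefix. reflexivity. Qed.

Lemma quiet_window_relative_bound n : (1 <= n)%nat ->
  2 * (/2) ^ (2 ^ S (S (Nat.log2 n)) - 1) / (/2) ^ n <= (/2) ^ Nat.log2 n.
Proof.
  intros Hn. set (K := Nat.log2 n). pose proof (Nat.log2_spec n Hn) as [H1 H2]. fold K in H1, H2.
  assert (HL : (n + S (S K) <= 2 ^ S (S K) - 1)%nat).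
  { rewrite (Nat.pow_succ_r' 2 (S K)). pose proof (Nat.pow_gt_lin_r 2 (S K) ltac:(lia)). lia. }
  assert (Hp : (/2) ^ (2 ^ S (S K) - 1) <= (/2) ^ n * (/2) ^ S (S K))
    by (rewrite <- pow_add; apply half_pow_le; lia).
  pose proof (half_pow_pos n).
  apply Rle_trans with (2 * ((/2) ^ n * (/2) ^ S (S K)) / (/2) ^ n).
  - unfold Rdiv. apply Rmult_le_compat_r; [left; apply Rinv_0_lt_compat; auto | lra].
  - replace (2 * ((/2) ^ n * (/2) ^ S (S K)) / (/2) ^ n) with ((/2) ^ S K)
      by (simpl; field; lra).
    apply half_pow_le. lia.
Qed.

Lemma Un_cv_of_log2_rate (u : nat -> R) (l : R) (K0 : nat) :
  (forall n, (1 <= n)%nat -> (K0 <= Nat.log2 n)%nat -> Rabs (u n - l) <= (/2) ^ Nat.log2 n) ->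
  Un_cv u l.
Proof.
  intros H e He. destruct (half_pow_small e He) as [m Hm].
  exists (2 ^ Nat.max K0 m)%nat. intros n Hn. unfold R_dist.
  pose proof (pow2_pos (Nat.max K0 m)).
  assert (HL : (Nat.max K0 m <= Nat.log2 n)%nat) by (apply log2_ge; lia).
  eapply Rle_lt_trans; [apply H; lia|].
  eapply Rle_lt_trans; [apply half_pow_le | exact Hm]. lia.
Qed.

Open Scope nat_scope.

Section Coding.
Variable h : list bool -> bool.

Definition verdict (x : cantor) (i : nat) : bool := h (prefix (data x) (Nat.log2 i)).

Definition decides (b : bool) (x : cantor) : Prop := exists i, first_flag x i /\ verdict x i = b.

Definition flagless (x : cantor) : Prop := forall i, is_flag i = true -> x i = false.

Lemma verdict_ext f g i : (forall j, j < i -> f j = g j) -> verdict f i = verdict g i.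
Proof.
  intros H. unfold verdict. f_equal. apply prefix_ext. intros k Hk. apply H, data_pos_lt, Hk.
Qed.

Lemma decides_unique b b' x : decides b x -> decides b' x -> b = b'.
Proof.
  intros [i [Hi <-]] [j [Hj <-]]. rewrite (first_flag_unique _ _ _ Hi Hj). reflexivity.
Qed.

Lemma decides_not_flagless b x : decides b x -> ~ flagless x.
Proof. intros [i [[H1 [H2 _]] _]] Hz. rewrite Hz in H2; auto. discriminate. Qed.

Lemma first_flag_of_not_flagless x : ~ flagless x -> exists i, first_flag x i.
Proof.
  intros Hz. apply not_all_ex_not in Hz. destruct Hz as [j Hj].
  destruct (find_flag x (S j)) as [i|] eqn:E.
  - exists i. apply (find_flag_Some _ _ _ E).
  - exfalso. apply Hj. intros Hp. apply (proj1 (find_flag_None x (S j)) E); auto.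
Qed.

Lemma decides_prefix b x i : first_flag x i -> verdict x i = b ->
  forall y, N (prefix x (S i)) y -> decides b y.
Proof.
  intros Hi Hv y Hy. exists i. split; [eapply N_prefix_first_flag; eauto|].
  rewrite <- Hv. apply verdict_ext. intros j Hj. apply (proj1 (N_prefix _ _ _) Hy). lia.
Qed.

Lemma decides_open b : open (decides b).
Proof. intros x [i [Hi Hv]]. exists (S i). apply decides_prefix; auto. Qed.

Definition status (s : list bool) : option bool :=
  match find_flag (of_list s) (length s) with
  | None => None
  | Some i => Some (verdict (of_list s) i)
  end.

Lemma status_Some s x b : N s x -> status s = Some b -> decides b x.
Proof.
  intros Hn. unfold status. destruct (find_flag (of_list s) (length s)) as [i|] eqn:E;
    [|discriminate].
  intros [= <-]. apply find_flag_Some in E. destruct E as [Hi Hfv]. exists i. split.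
  - apply (first_flag_ext (of_list s)); auto. intros j Hj. symmetry. apply N_of_list; auto. lia.
  - apply verdict_ext. intros j Hj. apply N_of_list; auto. lia.
Qed.

Lemma status_raise_flag a : status a = None -> is_flag (length a) = true ->
  exists b, status (a ++ [true]) = Some b.
Proof.
  unfold status. intros H Hp. destruct (find_flag (of_list a) (length a)) eqn:E; [discriminate|].
  rewrite length_app, Nat.add_1_r. simpl.
  rewrite (find_flag_ext _ (of_list a)) by (intros; apply of_list_snoc; auto). rewrite E.
  unfold of_list. rewrite app_nth2, Nat.sub_diag by lia. simpl. rewrite Hp. simpl. eauto.
Qed.

(* Splitting [N a] down to depth [D], or until the verdict is visible, and keeping the pieces
   that may still contain points decided [b]. *)
Fixpoint verdict_cover (b : bool) (a : list bool) (D : nat) : list (list bool) :=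
  match status a with
  | Some v => if Bool.eqb v b then [a] else []
  | None => match D with
            | O => [a]
            | S D => verdict_cover b (a ++ [false]) D ++ verdict_cover b (a ++ [true]) D
            end
  end.

Fixpoint flag_count (n D : nat) : nat :=
  match D with O => O | S D => (if is_flag n then 1 else 0) + flag_count (S n) D end.

Lemma flag_count_add n D1 D2 : flag_count n (D1 + D2) = flag_count n D1 + flag_count (n + D1) D2.
Proof.
  revert n. induction D1; intros n; simpl; [rewrite Nat.add_0_r; auto|].
  rewrite IHD1. replace (S n + D1) with (n + S D1) by lia. lia.
Qed.

Lemma flag_count_unbounded m n : exists D, m <= flag_count n D.
Proof.
  revert n. induction m; intros n; [exists O; lia|].
  destruct (is_flag_above n) as [p [Hp1 Hp2]].
  destruct (IHm (n + (p - n + 1))) as [D2 HD2].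
  exists (p - n + 1 + D2). rewrite flag_count_add, flag_count_add.
  replace (n + (p - n)) with p by lia. simpl. rewrite Hp2. lia.
Qed.

Lemma verdict_cover_covers b D a x : N a x -> ~ decides (negb b) x ->
  exists s, In s (verdict_cover b a D) /\ N s x.
Proof.
  revert a. induction D; intros a Ha Hb; simpl; destruct (status a) as [v|] eqn:E.
  1, 3: assert (v = b) as -> by (destruct v, b; auto; exfalso; eapply Hb, status_Some; eauto);
        rewrite Bool.eqb_reflx; exists a; simpl; auto.
  - exists a. simpl. auto.
  - destruct (IHD (a ++ [x (length a)]) (N_snoc a x Ha) Hb) as [s [Hs1 Hs2]].
    exists s. split; auto. apply in_or_app. destruct (x (length a)); auto.
Qed.

Open Scope R_scope.

Lemma verdict_cover_weight_Some a D v : status a = Some v ->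
  list_weight (verdict_cover true a D) + list_weight (verdict_cover false a D) = weight a.
Proof. intros H. destruct D; simpl; rewrite H; destruct v; simpl; ring. Qed.

(* Each flag position passed while splitting halves the undecided weight. *)
Lemma verdict_cover_weight D a :
  list_weight (verdict_cover true a D) + list_weight (verdict_cover false a D)
  <= weight a * (1 + (/2) ^ flag_count (length a) D).
Proof.
  revert a. induction D; intros a; destruct (status a) as [v|] eqn:E.
  1, 3: rewrite (verdict_cover_weight_Some a _ v E); pose proof (weight_pos a);
        match goal with |- context [(/2) ^ ?k] => pose proof (half_pow_pos k) end; nra.
  - simpl. rewrite E. simpl. lra.
  - simpl. rewrite E, !list_weight_app.
    pose proof (IHD (a ++ [false])) as H0. pose proof (IHD (a ++ [true])) as H1.
    rewrite length_app, Nat.add_1_r, weight_snoc in H0, H1.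
    destruct (is_flag (length a)) eqn:Ep.
    + destruct (status_raise_flag a E Ep) as [v Hv].
      pose proof (verdict_cover_weight_Some _ D v Hv) as HW. rewrite weight_snoc in HW.
      simpl. nra.
    + simpl. pose proof (weight_pos a). nra.
Qed.

Lemma measurable_between (X : cset) :
  (forall x, decides true x -> X x) -> (forall x, X x -> ~ decides false x) -> measurable X.
Proof.
  intros HU HV. apply measurable_of_finite_splits. intros a e He.
  destruct (half_pow_small e He) as [m Hm].
  destruct (flag_count_unbounded m (length a)) as [D HD].
  exists (verdict_cover true a D, verdict_cover false a D). repeat split; simpl.
  - intros x Ha Hx. apply verdict_cover_covers; auto.
  - intros x Ha Hx. apply verdict_cover_covers; auto.
  - eapply Rle_trans; [apply verdict_cover_weight|].
    pose proof (half_pow_le _ _ HD). pose proof (weight_pos a). pose proof (weight_le_1 a).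
    pose proof (half_pow_pos (flag_count (length a) D)). nra.
Qed.

Hypothesis h_stable :
  forall x, exists K0, forall k, (K0 <= k)%nat -> h (prefix x k) = h (prefix x K0).

Definition h_limit (x : cantor) : Prop :=
  exists K0, forall k, (K0 <= k)%nat -> h (prefix x k) = true.

Definition coded (x : cantor) : Prop := decides true x \/ (flagless x /\ h_limit (data x)).

Lemma flag_in_window y n w : flagless y -> (1 <= n)%nat -> N (prefix y n) w ->
  ~ quiet_window y (Nat.log2 n) w ->
  exists i, first_flag w i /\ verdict w i = h (prefix (data y) (Nat.log2 i)) /\
            (Nat.log2 n <= Nat.log2 i <= S (Nat.log2 n))%nat.
Proof.
  intros Hz Hn Hw Hq. set (K := Nat.log2 n) in *.
  pose proof (Nat.log2_spec n Hn) as [HK1 HK2]. fold K in HK1, HK2.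
  pose proof (proj1 (N_prefix y n w) Hw) as Hwy. clear Hw.
  apply not_all_ex_not in Hq. destruct Hq as [j Hj].
  apply imply_to_and in Hj. destruct Hj as [Hj1 Hj].
  apply imply_to_and in Hj. destruct Hj as [Hj2 Hj3].
  assert (Hjn : (n <= j)%nat)
    by (destruct (Nat.lt_ge_cases j n); auto; exfalso; apply Hj3, Hwy; auto).
  assert (Hpj : is_flag j = true).
  { destruct (is_flag j) eqn:E; auto. exfalso. apply Hj2.
    pose proof (not_flag_pow2 j E) as Hjp. set (m := Nat.log2 (S j)) in *.
    assert (K < m)%nat by (apply (Nat.pow_lt_mono_r_iff 2); lia).
    assert (m < S (S K))%nat by (apply (Nat.pow_lt_mono_r_iff 2); lia).
    replace m with (S K) in Hjp by lia. lia. }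
  assert (Hwj : w j = true) by (rewrite (Hz j Hpj) in Hj3; destruct (w j); auto).
  destruct (find_flag w (S j)) as [i|] eqn:E.
  2: { exfalso. rewrite (proj1 (find_flag_None w (S j)) E j) in Hwj; auto. discriminate. }
  apply find_flag_Some in E. destruct E as [Hi Hfv]. exists i. split; auto.
  assert (Hin : (n <= i)%nat).
  { destruct (Nat.lt_ge_cases i n); auto. exfalso. destruct Hfv as [H1 [H2 _]].
    rewrite Hwy, Hz in H2 by auto. discriminate. }
  assert (HK : (K <= Nat.log2 i)%nat) by (apply log2_ge; lia).
  assert (HK' : (Nat.log2 i < S (S K))%nat)
    by (apply Nat.log2_lt_pow2; [lia|]; rewrite Nat.pow_succ_r' in *; lia).
  split; [|lia].
  unfold verdict. f_equal. apply prefix_ext. intros k Hk. apply Hwy.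
  assert (2 ^ k <= 2 ^ K)%nat by (apply Nat.pow_le_mono_r; lia). pose proof (pow2_pos k). lia.
Qed.

Definition eventually_decides (y : cantor) (b : bool) : Prop :=
  exists K0, forall n w, (1 <= n)%nat -> (K0 <= Nat.log2 n)%nat -> N (prefix y n) w ->
    ~ quiet_window y (Nat.log2 n) w -> decides b w.

Lemma coded_eventually_decides y : exists b, (coded y <-> b = true) /\ eventually_decides y b.
Proof.
  destruct (classic (flagless y)) as [Hz|Hz].
  - destruct (h_stable (data y)) as [K0 HK0]. exists (h (prefix (data y) K0)). split.
    + split.
      * intros [Hu|[_ [K1 HK1]]]; [exfalso; eapply decides_not_flagless; eauto|].
        rewrite <- (HK0 (Nat.max K0 K1)) by lia. apply HK1. lia.
      * intros Hc. right. split; auto. exists K0. intros k Hk. rewrite HK0; auto.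
    + exists K0. intros n w Hn HK Hw Hq.
      destruct (flag_in_window y n w Hz Hn Hw Hq) as [i [Hi [Hv Hl]]].
      exists i. split; auto. rewrite Hv. apply HK0. lia.
  - destruct (first_flag_of_not_flagless y Hz) as [i Hi]. exists (verdict y i). split.
    + split.
      * intros [Hu|[Hz' _]]; [|contradiction].
        symmetry. apply (decides_unique _ _ y Hu). exists i; auto.
      * intros Hv. left. exists i. rewrite Hv. auto.
    + exists (S i). intros n w Hn HK Hw _. apply (decides_prefix _ y i Hi eq_refl).
      eapply N_prefix_le; [|exact Hw].
      pose proof (Nat.pow_le_mono_r 2 _ _ ltac:(lia) HK). pose proof (Nat.log2_spec n Hn).
      pose proof (Nat.pow_gt_lin_r 2 (S i) ltac:(lia)). lia.
Qed.

Section Sandwiched.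
Variable X : cset.
Hypothesis accepted_in : forall x, decides true x -> X x.
Hypothesis rejected_out : forall x, X x -> ~ decides false x.

Lemma density_of_eventually_decides y b :
  eventually_decides y b -> density X y (if b then 1 else 0).
Proof.
  intros [K0 HK0]. apply (Un_cv_of_log2_rate _ _ K0). intros n Hn HK.
  pose proof (quiet_window_relative_bound n Hn) as Hrel.
  pose proof (mu_quiet_window y (Nat.log2 n)) as Hmu.
  fold (ratio X (prefix y n)). destruct b.
  - assert (HE : forall w, N (prefix y n) w -> ~ X w -> quiet_window y (Nat.log2 n) w).
    { intros w Hw HX. apply NNPP. intros Hq. apply HX, accepted_in, (HK0 n w); auto. }
    destruct (ratio_near_one X _ _ _ HE Hmu) as [R1 R2]. rewrite weight_prefix in R1.
    rewrite Rabs_left1 by lra. lra.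
  - assert (HE : forall w, N (prefix y n) w -> X w -> quiet_window y (Nat.log2 n) w).
    { intros w Hw HX. apply NNPP. intros Hq. apply (rejected_out w HX), (HK0 n w); auto. }
    destruct (ratio_near_zero X _ _ _ HE Hmu) as [R1 R2]. rewrite weight_prefix in R2.
    rewrite Rminus_0_r, Rabs_right by lra. lra.
Qed.

Lemma density_coded y : (coded y -> density X y 1) /\ (~ coded y -> density X y 0).
Proof.
  destruct (coded_eventually_decides y) as [b [Hb Hd]].
  apply density_of_eventually_decides in Hd.
  destruct b; split; intros Hy; auto.
  - exfalso. apply Hy, Hb. reflexivity.
  - apply Hb in Hy. discriminate.
Qed.

Lemma set_eq_Phi_sandwiched : set_eq coded (Phi X).
Proof.
  intros y. destruct (density_coded y) as [D1 D0]. unfold Phi. split; auto.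
  intros Hd. apply NNPP. intros Hy. pose proof (UL_sequence _ _ _ (D0 Hy) Hd). lra.
Qed.
End Sandwiched.

Lemma coded_sandwiched :
  (forall x, decides true x -> coded x) /\ (forall x, coded x -> ~ decides false x).
Proof.
  split; [intros x Hx; left; exact Hx|].
  intros x [Hu|[Hz _]] Hv.
  - discriminate (decides_unique _ _ x Hu Hv).
  - exact (decides_not_flagless _ _ Hv Hz).
Qed.

Lemma coded_dualistic : dualistic coded.
Proof.
  destruct coded_sandwiched as [H1 H2]. split; [apply measurable_between; auto|].
  intros y. destruct (density_coded coded H1 H2 y) as [D1 D0].
  destruct (classic (coded y)); auto.
Qed.
End Coding.

Open Scope nat_scope.

Lemma least_witness (P : nat -> Prop) :
  (exists j, P j) -> exists j, P j /\ forall i, i < j -> ~ P i.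
Proof.
  intros [j Hj]. induction j as [j IH] using (well_founded_induction Wf_nat.lt_wf).
  destruct (classic (exists i, i < j /\ P i)) as [[i [Hi1 Hi2]]|Hn].
  - apply (IH i Hi1 Hi2).
  - exists j. split; auto. intros i Hi HP. apply Hn. eauto.
Qed.

Lemma least_witness_unique (P : nat -> Prop) j1 j2 :
  P j1 -> (forall i, i < j1 -> ~ P i) -> P j2 -> (forall i, i < j2 -> ~ P i) -> j1 = j2.
Proof.
  intros H1 H1' H2 H2'. destruct (Nat.lt_trichotomy j1 j2) as [H|[H|H]]; auto.
  - exfalso; eapply H2'; eauto.
  - exfalso; eapply H1'; eauto.
Qed.

(* For a cover of the Cantor space by closed sets, the least index of a set meeting [N t]
   converges along every point to the least index of a set containing it. *)
Section FirstMeeting.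
Variable G : nat -> cset.
Hypothesis G_closed : forall j, closed (G j).
Hypothesis G_cover : forall x, exists j, G j x.

Definition meets (t : list bool) (j : nat) : Prop := exists z, N t z /\ G j z.

Definition least_meeting (t : list bool) (j : nat) : Prop :=
  meets t j /\ forall i, i < j -> ~ meets t i.

Definition first_meeting (t : list bool) : nat := epsilon (inhabits 0) (least_meeting t).

Lemma first_meeting_spec t : least_meeting t (first_meeting t).
Proof.
  unfold first_meeting. apply epsilon_spec, least_witness. destruct (G_cover (of_list t)) as [j Hj].
  exists j, (of_list t). split; auto. intros i Hi. reflexivity.
Qed.

Lemma first_meeting_eventually x :
  exists j0 K0, G j0 x /\ forall k, K0 <= k -> first_meeting (prefix x k) = j0.
Proof.
  destruct (least_witness (fun j => G j x) (G_cover x)) as [j0 [Hj0 Hless]].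
  assert (Hfar : forall m, m <= j0 ->
            exists M, forall i k y, i < m -> M <= k -> N (prefix x k) y -> ~ G i y).
  { induction m; intros Hm; [exists 0; intros; lia|].
    destruct IHm as [M HM]; [lia|].
    destruct (G_closed m x (Hless m ltac:(lia))) as [M' HM'].
    exists (Nat.max M M'). intros i k y Hi Hk Hy.
    assert (i < m \/ i = m) as [Hl|Hi_eq] by lia; [|subst i].
    - apply (HM i k y Hl); [lia | exact Hy].
    - apply HM'. eapply N_prefix_le; [|exact Hy]. lia. }
  destruct (Hfar j0 (le_n _)) as [M HM].
  exists j0, M. split; auto. intros k Hk.
  destruct (first_meeting_spec (prefix x k)) as [Hm Hm'].
  symmetry. apply (least_witness_unique (meets (prefix x k))); auto.
  - exists x. split; auto. apply N_prefix_self.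
  - intros i Hi [z [Hz1 Hz2]]. eapply HM; eauto.
Qed.
End FirstMeeting.

Lemma Delta02_closed_cover (A : cset) : Delta02 A ->
  exists G : nat -> cset, (forall j, closed (G j)) /\ (forall x, exists j, G j x) /\
    (forall j x, G j x -> (A x <-> Nat.even j = true)).
Proof.
  intros [[F [HF1 HF2]] [G [HG1 HG2]]].
  exists (fun j => if Nat.even j then F (Nat.div2 j) else compl (G (Nat.div2 j))).
  split; [|split].
  - intros j. destruct (Nat.even j); auto.
    intros x Hx. assert (Hx' : G (Nat.div2 j) x) by (apply NNPP; auto).
    destruct (HG1 _ x Hx') as [n Hn]. exists n. intros y Hy Hc. apply Hc. auto.
  - intros x. destruct (classic (A x)) as [Ha|Ha].
    + destruct (proj1 (HF2 x) Ha) as [k Hk]. exists (2 * k).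
      rewrite Nat.even_mul, Nat.div2_double. simpl. auto.
    + destruct (not_all_ex_not _ _ (fun H => Ha (proj2 (HG2 x) H))) as [k Hk].
      exists (S (2 * k)). rewrite Nat.even_succ, Nat.odd_mul, Nat.div2_succ_double. simpl. auto.
  - intros j x. destruct (Nat.even j); intros H.
    + split; auto. intros _. apply HF2. eauto.
    + split; [|discriminate]. intros Ha. exfalso. apply H, HG2, Ha.
Qed.

(* Limit lemma: the parity of the first closed set of [Delta02_closed_cover] meeting the current
   cylinder stabilises along every point, and its limit decides membership in [A]. *)
Lemma Delta02_limit_code (A : cset) : Delta02 A ->
  exists (h : list bool -> bool) (wit : list bool -> cantor),
    (forall x, exists K0, forall k, K0 <= k -> h (prefix x k) = h (prefix x K0)) /\
    (forall x, A x <-> h_limit h x) /\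
    (forall t, N t (wit t) /\ (A (wit t) <-> h t = true)).
Proof.
  intros HA. destruct (Delta02_closed_cover A HA) as [G [HGc [HGcov HGA]]].
  set (wit := fun t => epsilon (inhabits (fun _ : nat => false))
                         (fun z => N t z /\ G (first_meeting G t) z)).
  exists (fun t => Nat.even (first_meeting G t)), wit. split; [|split].
  - intros x. destruct (first_meeting_eventually G HGc HGcov x) as [j0 [K0 [_ H]]].
    exists K0. intros k Hk. rewrite !H; auto.
  - intros x. destruct (first_meeting_eventually G HGc HGcov x) as [j0 [K0 [H1 H3]]].
    rewrite (HGA j0 x H1). unfold h_limit. split.
    + intros He. exists K0. intros k Hk. rewrite H3; auto.
    + intros [K1 HK1]. rewrite <- (H3 (Nat.max K0 K1)) by lia. apply HK1. lia.
  - intros t. assert (Hw : N t (wit t) /\ G (first_meeting G t) (wit t))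
      by (apply epsilon_spec, (first_meeting_spec G HGcov t)).
    destruct Hw as [H1 H2]. exact (conj H1 (HGA _ _ H2)).
Qed.

Lemma closed_compl U : open U -> closed (compl U).
Proof.
  intros HU x Hx. apply NNPP in Hx. destruct (HU x Hx) as [n Hn].
  exists n. intros y Hy Hc. apply Hc, Hn, Hy.
Qed.

Section Reductions.
Variable A : cset.
Variable h : list bool -> bool.
Variable wit : list bool -> cantor.
Hypothesis A_h_limit : forall x, A x <-> h_limit h x.
Hypothesis wit_spec : forall t, N t (wit t) /\ (A (wit t) <-> h t = true).

Definition flag_index (y : cantor) : nat := epsilon (inhabits 0) (first_flag y).

Lemma flag_index_spec y : ~ flagless y -> first_flag y (flag_index y).
Proof. intros H. unfold flag_index. apply epsilon_spec, first_flag_of_not_flagless, H. Qed.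

(* A flagged point is sent to a point of [A] or of its complement according to its verdict. *)
Definition decode (y : cantor) : cantor :=
  if excluded_middle_informative (flagless y) then data y
  else wit (prefix (data y) (Nat.log2 (flag_index y))).

Definition encode (x : cantor) : cantor := fun j => if is_flag j then false else x (Nat.log2 (S j)).

Lemma coded_flagged y : ~ flagless y -> (coded h y <-> verdict h y (flag_index y) = true).
Proof.
  intros Hz. pose proof (flag_index_spec y Hz) as Hf. split.
  - intros [[j [Hj Hv]]|[Hz' _]]; [|contradiction]. rewrite (first_flag_unique _ _ _ Hf Hj). auto.
  - intros Hv. left. exists (flag_index y). auto.
Qed.

Lemma coded_flagless y : flagless y -> (coded h y <-> A (data y)).
Proof.
  intros Hz. rewrite A_h_limit. split.
  - intros [Hu|[_ H]]; auto. exfalso; eapply decides_not_flagless; eauto.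
  - intros H. right. auto.
Qed.

Lemma coded_iff_decode y : coded h y <-> A (decode y).
Proof.
  unfold decode. destruct (excluded_middle_informative (flagless y)) as [Hz|Hz].
  - apply coded_flagless; auto.
  - rewrite coded_flagged by auto. rewrite (proj2 (wit_spec _)). reflexivity.
Qed.

Lemma decode_continuous : continuous decode.
Proof.
  intros x n. destruct (classic (flagless x)) as [Hz|Hz].
  - exists (2 ^ n). intros y Hy i Hi.
    assert (Hd : data y i = data x i).
    { unfold data. apply Hy. pose proof (Nat.pow_lt_mono_r 2 i n ltac:(lia) Hi). lia. }
    unfold decode. destruct (excluded_middle_informative (flagless x)); [|contradiction].
    destruct (excluded_middle_informative (flagless y)) as [|Hzy]; auto.
    pose proof (flag_index_spec y Hzy) as [Hf1 [Hf2 _]]. set (i0 := flag_index y) in *.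
    assert (Hi0 : 2 ^ n <= i0).
    { destruct (Nat.lt_ge_cases i0 (2 ^ n)); auto. exfalso.
      rewrite Hy, Hz in Hf2 by auto. discriminate. }
    destruct (wit_spec (prefix (data y) (Nat.log2 i0))) as [HN _].
    rewrite (proj1 (N_prefix _ _ _) HN); auto.
    pose proof (Nat.log2_le_pow2 i0 n ltac:(pose proof (pow2_pos n); lia)). lia.
  - pose proof (flag_index_spec x Hz) as Hf. exists (S (flag_index x)). intros y Hy i Hi.
    assert (Hxy : N (prefix x (S (flag_index x))) y) by (apply N_prefix; auto).
    assert (Hfy : first_flag y (flag_index x)) by (eapply N_prefix_first_flag; eauto).
    assert (Hzy : ~ flagless y)
      by (intros Hzy; destruct Hfy as [H1 [H2 _]]; rewrite Hzy in H2; auto; discriminate).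
    assert (Heq : flag_index y = flag_index x)
      by (eapply first_flag_unique; [apply flag_index_spec; auto | exact Hfy]).
    unfold decode. destruct (excluded_middle_informative (flagless x)); [contradiction|].
    destruct (excluded_middle_informative (flagless y)); [contradiction|].
    rewrite Heq, (prefix_ext (data y) (data x)); [reflexivity|].
    intros k Hk. apply Hy. pose proof (data_pos_lt k (flag_index x) Hk). lia.
Qed.

Lemma encode_continuous : continuous encode.
Proof.
  intros x n. exists n. intros y Hy i Hi. unfold encode. destruct (is_flag i); auto.
  apply Hy. pose proof (Nat.log2_lt_lin (S i) ltac:(lia)). lia.
Qed.

Lemma data_encode x : data (encode x) = x.
Proof.
  apply functional_extensionality. intros k. unfold data, encode. rewrite is_flag_data_pos.
  pose proof (pow2_pos k). replace (S (2 ^ k - 1)) with (2 ^ k) by lia.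
  rewrite Nat.log2_pow2 by lia. reflexivity.
Qed.

Lemma A_iff_coded_encode x : A x <-> coded h (encode x).
Proof.
  assert (Hz : flagless (encode x)) by (intros j Hj; unfold encode; rewrite Hj; auto).
  rewrite coded_flagless, data_encode by auto. tauto.
Qed.

Lemma coded_wadge_eq : wadge_eq (coded h) A.
Proof.
  split.
  - exists decode. split; [apply decode_continuous | apply coded_iff_decode].
  - exists encode. split; [apply encode_continuous | apply A_iff_coded_encode].
Qed.
End Reductions.

Theorem theorem5p3 : forall A : cset, Delta02 A ->
  exists B : cset, wadge_eq B A /\ dualistic B /\
    exists C U : cset, closed C /\ open U /\
      set_eq B (Phi C) /\ set_eq B (Phi U).
Proof.
  intros A HA. destruct (Delta02_limit_code A HA) as [h [wit [Hstable [HAh Hwit]]]].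
  destruct (coded_sandwiched h) as [Hacc Hrej].
  exists (coded h). split; [|split].
  - exact (coded_wadge_eq A h wit HAh Hwit).
  - exact (coded_dualistic h Hstable).
  - exists (compl (decides h false)), (decides h true).
    assert (Hexcl : forall x, decides h true x -> ~ decides h false x)
      by (intros x Hx Hv; discriminate (decides_unique _ _ _ x Hx Hv)).
    split; [apply closed_compl, decides_open|]. split; [apply decides_open|].
    split; apply set_eq_Phi_sandwiched; auto.
Qed.
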